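(* Let $\mathbf{Z}(\mathbf{s},t)=\{Z_1(\mathbf{s},t),\ldots,Z_p(\mathbf{s},t)\}^\top$ be a $p$-variate strictly stationary spatio-temporal random field with cross-covariance functions $C_{ij}(\mathbf{h},u)=\operatorname{cov}\{Z_i(\mathbf{s}+\mathbf{h},t+u),Z_j(\mathbf{s},t)\}$. If any two of the properties V$\mid$ST, S$\mid$VT, T$\mid$VS hold, then the remaining one also holds and the covariance is fully separable.
   Context: Separability types (each required for all $i,j\in\{1,\ldots,p\}$ and all space lags $\mathbf{h}$ and time lags $u$): V$\mid$ST: $C_{ij}(\mathbf{h},u)=\rho_1(\mathbf{h},u)C_{ij}(\mathbf{0},0)$ for some function $\rho_1$ with $\rho_1(\mathbf{0},0)=1$. S$\mid$VT: $C_{ij}(\mathbf{h},u)=\rho_2(\mathbf{h})C_{ij}(\mathbf{0},u)$ for some $\rho_2$ with $\rho_2(\mathbf{0})=1$. T$\mid$VS: $C_{ij}(\mathbf{h},u)=\rho_3(u)C_{ij}(\mathbf{h},0)$ for some $\rho_3$ with $\rho_3(0)=1$. V$\mid$S: $C_{ij}(\mathbf{h},u)=\rho_4(\mathbf{h},u)C_{ij}(\mathbf{0},u)$ for some $\rho_4$ with $\rho_4(\mathbf{0},u)=1$ for all $u$. V$\mid$T: $C_{ij}(\mathbf{h},u)=\rho_5(\mathbf{h},u)C_{ij}(\mathbf{h},0)$ for some $\rho_5$ with $\rho_5(\mathbf{h},0)=1$ for all $\mathbf{h}$. S$\mid$T: $C_{ij}(\mathbf{h},u)=\rho_{6,ij}(\mathbf{h})C_{ij}(\mathbf{0},u)$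 for some functions $\rho_{6,ij}$ with $\rho_{6,ij}(\mathbf{0})=1$. The covariance is fully separable if it satisfies all six of these separability properties. *)

From HB Require Import structures.
From mathcomp Require Import all_boot all_order all_algebra.
From mathcomp Require Import all_classical all_reals all_analysis.
Set Implicit Arguments. Unset Strict Implicit. Unset Printing Implicit Defensive.
Import Order.TTheory GRing.Theory Num.Theory.
Local Open Scope classical_set_scope.
Local Open Scope ring_scope.

Definition stfield d (T : measurableType d) (R : realType) (P : probability T R)
  (p sd : nat) := 'I_p -> 'rV[R]_sd -> R -> {RV P >-> R}.

(* Strict stationarity: all finite-dimensional distributions (given by their
   joint distribution functions) are invariant under space-time shifts. *)
Definition strictly_stationary d (T : measurableType d) (R : realType)
  (P : probability T R) (p sd : nat) (Z : stfield P p sd) : Prop :=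
  forall (n : nat) (ks : 'I_n -> 'I_p) (ss : 'I_n -> 'rV[R]_sd)
    (ts : 'I_n -> R) (xs : 'I_n -> R) (h : 'rV[R]_sd) (u : R),
    P [set w | forall k, Z (ks k) (ss k + h) (ts k + u) w <= xs k] =
    P [set w | forall k, Z (ks k) (ss k) (ts k) w <= xs k].

(* Finite second moments, so that covariances exist. *)
Definition second_order d (T : measurableType d) (R : realType)
  (P : probability T R) (p sd : nat) (Z : stfield P p sd) : Prop :=
  forall i s t, (Z i s t : T -> R) \in Lfun P 2%:E.

(* Cross-covariance C_ij(h,u) = cov{Z_i(s+h,t+u), Z_j(s,t)}; by stationarity
   it does not depend on (s,t), so we take (s,t) = (0,0). *)
Definition crosscov d (T : measurableType d) (R : realType)
  (P : probability T R) (p sd : nat) (Z : stfield P p sd)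
  (i j : 'I_p) (h : 'rV[R]_sd) (u : R) : R :=
  fine (covariance P (Z i h u) (Z j 0 0)).

Section Sep.
Context (R : realType) (p sd : nat).
Implicit Type C : 'I_p -> 'I_p -> 'rV[R]_sd -> R -> R.

Definition sep_V_ST C := exists rho1 : 'rV[R]_sd -> R -> R,
  rho1 0 0 = 1 /\ forall i j h u, C i j h u = rho1 h u * C i j 0 0.
Definition sep_S_VT C := exists rho2 : 'rV[R]_sd -> R,
  rho2 0 = 1 /\ forall i j h u, C i j h u = rho2 h * C i j 0 u.
Definition sep_T_VS C := exists rho3 : R -> R,
  rho3 0 = 1 /\ forall i j h u, C i j h u = rho3 u * C i j h 0.
Definition sep_V_S C := exists rho4 : 'rV[R]_sd -> R -> R,
  (forall u, rho4 0 u = 1) /\ forall i j h u, C i j h u = rho4 h u * C i j 0 u.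
Definition sep_V_T C := exists rho5 : 'rV[R]_sd -> R -> R,
  (forall h, rho5 h 0 = 1) /\ forall i j h u, C i j h u = rho5 h u * C i j h 0.
Definition sep_S_T C := exists rho6 : 'I_p -> 'I_p -> 'rV[R]_sd -> R,
  (forall i j, rho6 i j 0 = 1) /\
  forall i j h u, C i j h u = rho6 i j h * C i j 0 u.

Definition fully_separable C :=
  sep_V_ST C /\ sep_S_VT C /\ sep_T_VS C /\ sep_V_S C /\ sep_V_T C /\ sep_S_T C.
End Sep.

From HB Require Import structures.
From mathcomp Require Import all_boot all_order all_algebra.
From mathcomp Require Import all_classical all_reals all_analysis.
Import GRing.Theory.
Local Open Scope ring_scope.

(* Chaining
   two such factorizations, e.g. C(h,u) = rho2(h) C(0,u) = rho2(h) rho3(u) C(0,0),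
   gives the third with an explicit factor, and S|VT together with T|VS already
   supply the factors needed for V|S, V|T and S|T. *)

Section Separability.
Variables (R : realType) (p sd : nat) (C : 'I_p -> 'I_p -> 'rV[R]_sd -> R -> R).

Lemma sep_T_VS_of_V_ST_S_VT : sep_V_ST C -> sep_S_VT C -> sep_T_VS C.
Proof.
move=> [rho1 [rho1_0 eC1]] [rho2 [_ eC2]].
exists (rho1 0); split=> // i j h u.
by rewrite eC2 (eC2 _ _ _ 0) eC1 mulrCA.
Qed.

Lemma sep_S_VT_of_V_ST_T_VS : sep_V_ST C -> sep_T_VS C -> sep_S_VT C.
Proof.
move=> [rho1 [rho1_0 eC1]] [rho3 [_ eC3]].
exists (rho1^~ 0); split=> // i j h u.
by rewrite eC3 (eC1 _ _ _ 0) (eC3 _ _ 0 u) mulrCA.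
Qed.

Lemma sep_V_ST_of_S_VT_T_VS : sep_S_VT C -> sep_T_VS C -> sep_V_ST C.
Proof.
move=> [rho2 [rho2_0 eC2]] [rho3 [rho3_0 eC3]].
exists (fun h u => rho2 h * rho3 u); split; first by rewrite rho2_0 rho3_0 mulr1.
by move=> i j h u; rewrite eC2 eC3 mulrA.
Qed.

Lemma sep_V_S_of_S_VT : sep_S_VT C -> sep_V_S C.
Proof. by move=> [rho2 [rho2_0 eC2]]; exists (fun h _ => rho2 h). Qed.

Lemma sep_V_T_of_T_VS : sep_T_VS C -> sep_V_T C.
Proof. by move=> [rho3 [rho3_0 eC3]]; exists (fun _ u => rho3 u). Qed.

Lemma sep_S_T_of_S_VT : sep_S_VT C -> sep_S_T C.
Proof. by move=> [rho2 [rho2_0 eC2]]; exists (fun _ _ => rho2). Qed.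

Lemma fully_separable_of_S_VT_T_VS : sep_S_VT C -> sep_T_VS C -> fully_separable C.
Proof.
move=> CS CT; split; first exact: sep_V_ST_of_S_VT_T_VS.
do 2![split=> //]; split; first exact: sep_V_S_of_S_VT.
by split; [exact: sep_V_T_of_T_VS | exact: sep_S_T_of_S_VT].
Qed.

Lemma sep_all_of_two :
  (sep_V_ST C /\ sep_S_VT C) \/ (sep_V_ST C /\ sep_T_VS C) \/
  (sep_S_VT C /\ sep_T_VS C) ->
  [/\ sep_V_ST C, sep_S_VT C & sep_T_VS C].
Proof.
case=> [[CV CS]|[[CV CT]|[CS CT]]].
- by split=> //; exact: sep_T_VS_of_V_ST_S_VT.
- by split=> //; exact: sep_S_VT_of_V_ST_T_VS.
- by split=> //; exact: sep_V_ST_of_S_VT_T_VS.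
Qed.

End Separability.

(* Stationarity and finite second moments only make C a well-defined
   covariance; the implications themselves hold for any function C. *)
Theorem proposition4 (d : measure_display) (T : measurableType d)
  (R : realType) (P : probability T R) (p sd : nat) (Z : stfield P p sd) :
  strictly_stationary Z -> second_order Z ->
  let C := crosscov Z in
  (sep_V_ST C /\ sep_S_VT C) \/ (sep_V_ST C /\ sep_T_VS C) \/
  (sep_S_VT C /\ sep_T_VS C) ->
  [/\ sep_V_ST C, sep_S_VT C, sep_T_VS C & fully_separable C].
Proof.
move=> _ _ C /sep_all_of_two[CV CS CT].
by split=> //; exact: fully_separable_of_S_VT_T_VS.
Qed.
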